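(* Let $(X,u)$ and $(Y,v)$ be Čech closure spaces, let $Y^X$ be the set of all continuous maps $(X,u)\to(Y,v)$, and let $\tau$ be the finest proper topology on $Y^X$. A subset $G\subset Y^X$ is $\tau$-open if and only if for every $f\in G$ and every net $(f_\lambda)_{\lambda\in\Lambda}$ in $Y^X$ such that $$\overline{\lim_{\Lambda}}\, f_\lambda^{-1}(B)\subset f^{-1}(v(B))\quad\text{for every } B\subset Y,$$ there exists $\lambda_0\in\Lambda$ with $f_\lambda\in G$ for every $\lambda\ge\lambda_0$.
   Context: A Čech closure space $(X,u)$ is a set $X$ with an operator $u:\mathcal P(X)\to\mathcal P(X)$ satisfying $u(\emptyset)=\emptyset$, $A\subset u(A)$, and $u(A\cup B)=u(A)\cup u(B)$. The interior is $\mathrm{int}_u A=X\setminus u(X\setminus A)$; $U$ is a neighbourhood of $x$ if $x\in\mathrm{int}_uU$. A map $f:(X,u)\to(Y,v)$ is continuous if $f(u(A))\subset v(f(A))$ for all $A$. For a net $(A_\lambda)_{\lambda\in\Lambda}$ of subsets of $X$, its upper limit $\overline{\lim_{\Lambda}}A_\lambda$ is the set of all $x\in X$ such that for every $\lambda_0\in\Lambda$ and every neighbourhood $U$ of $x$ there is $\lambda\ge\lambda_0$ with $A_\lambda\cap U\ne\emptyset$. The product $(Z,w)\times(X,u)$ is $Z\times X$ with the closure operator for which the sets $W\times U$ ($W$ a neighbourhood of $z$, $U$ of $x$) form a neighbourhood base at $(z,x)$; for $g:Z\times X\to Y$, $g^*(z)(x)=g(z,x)$. A closure operator $\sigma$ on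 $Y^X$ is proper if for every closure space $(Z,w)$, continuity of $g:(Z,w)\times(X,u)\to(Y,v)$ implies continuity of $g^*:(Z,w)\to(Y^X,\sigma)$. A topology on $Y^X$ is proper if its Kuratowski closure operator is proper; the finest proper topology is the largest (with respect to inclusion of open sets) proper topology on $Y^X$, which exists. *)

From mathcomp Require Import all_boot.
From mathcomp Require Import boolp classical_sets.
Unset Printing Implicit Defensive.
Local Open Scope classical_set_scope.

Definition is_closure {X : Type} (u : set X -> set X) : Prop :=
  [/\ u set0 = set0,
      (forall A, A `<=` u A) &
      (forall A B, u (A `|` B) = u A `|` u B)].

Definition cl_int {X : Type} (u : set X -> set X) (A : set X) : set X :=
  ~` u (~` A).

Definition cl_nbhd {X : Type} (u : set X -> set X) (x : X) (U : set X) : Prop :=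
  cl_int u U x.

Definition cl_continuous {X Y : Type} (u : set X -> set X) (v : set Y -> set Y)
  (f : X -> Y) : Prop :=
  forall A : set X, f @` (u A) `<=` v (f @` A).

(* product closure: the sets W × U (W nbhd of z, U nbhd of x) form a
   neighbourhood base at (z, x); hence (z,x) is in the closure of S iff
   every such W × U meets S. *)
Definition prod_closure {Z X : Type} (w : set Z -> set Z) (u : set X -> set X)
  (S : set (Z * X)) : set (Z * X) :=
  [set p | forall (W : set Z) (U : set X), cl_nbhd w p.1 W -> cl_nbhd u p.2 U ->
           (W `*` U) `&` S !=set0].

Definition contmap {X Y : Type} (u : set X -> set X) (v : set Y -> set Y) : Type :=
  {f : X -> Y | cl_continuous u v f}.

Definition proper_closure {X Y : Type} (u : set X -> set X) (v : set Y -> set Y)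
  (sigma : set (contmap u v) -> set (contmap u v)) : Prop :=
  forall (Z : Type) (w : set Z -> set Z), is_closure w ->
  forall (g : Z * X -> Y), cl_continuous (prod_closure w u) v g ->
  forall (gs : Z -> contmap u v), (forall z x, proj1_sig (gs z) x = g (z, x)) ->
  cl_continuous w sigma gs.

Definition is_topology {T : Type} (O : set (set T)) : Prop :=
  [/\ O setT, O set0,
      (forall (I : Type) (F : I -> set T), (forall i, O (F i)) -> O (\bigcup_i F i)) &
      (forall A B, O A -> O B -> O (A `&` B))].

Definition kclosure {T : Type} (O : set (set T)) (A : set T) : set T :=
  [set t | forall G, O G -> G t -> G `&` A !=set0].

Definition proper_topology {X Y : Type} (u : set X -> set X) (v : set Y -> set Y)
  (O : set (set (contmap u v))) : Prop :=
  is_topology O /\ proper_closure u v (kclosure O).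

Definition finest_proper_topology {X Y : Type} (u : set X -> set X) (v : set Y -> set Y)
  (O : set (set (contmap u v))) : Prop :=
  proper_topology u v O /\
  forall O' : set (set (contmap u v)), proper_topology u v O' -> O' `<=` O.

Definition directed {L : Type} (le : L -> L -> Prop) : Prop :=
  [/\ (exists l : L, True),
      (forall l, le l l),
      (forall a b c, le a b -> le b c -> le a c) &
      (forall a b, exists c, le a c /\ le b c)].

Definition upper_limit {X : Type} (u : set X -> set X) {L : Type}
  (le : L -> L -> Prop) (A : L -> set X) : set X :=
  [set x | forall (l0 : L) (U : set X), cl_nbhd u x U ->
           exists l, le l0 l /\ A l `&` U !=set0].

(* If the net (f_l) converges to f in the sense of the theorem, the map on
   (L + {oo}) x X equal to f_l on {l} x X and to f on {oo} x X is continuous,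
   where oo lies in the closure of every set of indices that is frequent in L.
   Properness of tau applied to this map puts f in the tau-closure of any
   frequent set of f_l's, so tau-open sets are net-open.  Conversely, when z
   lies in w(A), the net of points of A approaching z turns continuity of
   g : Z x X -> Y into convergence of g(a, .) to g(z, .); hence the net-open
   sets form a proper topology, which is coarser than the finest one. *)
From mathcomp Require Import all_boot.
From mathcomp Require Import boolp classical_sets.
Local Open Scope classical_set_scope.

Section ClosureSpace.
Context {X : Type} {u : set X -> set X}.
Hypothesis hu : is_closure u.

Lemma closure_mono A B : A `<=` B -> u A `<=` u B.
Proof.
case: hu => _ _ uU AB; rewrite -((setUidPr A B).2 AB) uU.
by move=> x ux; left.
Qed.

Lemma closure_nbhdP A x : u A x <-> (forall U, cl_nbhd u x U -> U `&` A !=set0).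
Proof.
split=> [uAx U nU | meet].
- apply: contrapT => UA0; apply: nU; apply: closure_mono uAx.
  by move=> a Aa Ua; apply: UA0; exists a.
- apply: contrapT => uAx.
  have nCA : cl_nbhd u x (~` A) by rewrite /cl_nbhd /cl_int setCK.
  by have [a []] := meet _ nCA.
Qed.

Lemma nbhdT x : cl_nbhd u x setT.
Proof. by case: hu => u0 _ _; rewrite /cl_nbhd /cl_int setCT u0. Qed.

Lemma nbhdI x U V : cl_nbhd u x U -> cl_nbhd u x V -> cl_nbhd u x (U `&` V).
Proof. by case: hu => _ _ uU nU nV; rewrite /cl_nbhd /cl_int setCI uU; case. Qed.

End ClosureSpace.

Section Nets.
Context {L : Type} (le : L -> L -> Prop).

Definition frequently (P : L -> Prop) := forall l0, exists l, le l0 l /\ P l.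

Definition eventually (P : L -> Prop) := exists l0, forall l, le l0 l -> P l.

Lemma not_frequently {P : L -> Prop} : ~ frequently P -> eventually (fun l => ~ P l).
Proof.
move=> nfP; apply: contrapT => neP; apply: nfP => l0; apply: contrapT => nP.
by apply: neP; exists l0 => l l0l Pl; apply: nP; exists l.
Qed.

Lemma not_eventually {P : L -> Prop} : ~ eventually P -> frequently (fun l => ~ P l).
Proof.
move=> neP; apply: contrapT => /not_frequently [l0 ePP]; apply: neP.
by exists l0 => l /ePP; apply: contrapT.
Qed.

Hypothesis hdir : directed le.

Lemma eventuallyI {P Q : L -> Prop} :
  eventually P -> eventually Q -> eventually (fun l => P l /\ Q l).
Proof.
case: hdir => _ _ le_trans ub [l1 P1] [l2 Q2]; have [l [l1l l2l]] := ub l1 l2.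
by exists l => l' ll'; split; [apply: P1 | apply: Q2]; exact: le_trans ll'.
Qed.

Lemma frequentlyU {P Q : L -> Prop} :
  frequently (fun l => P l \/ Q l) -> frequently P \/ frequently Q.
Proof.
move=> fPQ; apply: contrapT => /not_orP [/not_frequently eP /not_frequently eQ].
have [l0 ePQ] := eventuallyI eP eQ; have [l [l0l PQl]] := fPQ l0.
by have [nPl nQl] := ePQ l l0l; case: PQl.
Qed.

(* The closure of L + {oo}, with oo encoded as None. *)
Definition tail_closure (A : set (option L)) : set (option L) :=
  A `|` [set z | z = None /\ frequently (fun l => A (Some l))].

Lemma tail_closure_is_closure : is_closure tail_closure.
Proof.
have [[l _] _ _ _] := hdir; split.
- rewrite predeqE => z; split=> // -[] // [_ /(_ l)] [? [_ []]].
- by move=> A z Az; left.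
- move=> A B; rewrite predeqE => z; split.
  + case=> [[Az|Bz] | [-> /frequentlyU [fA|fB]]].
    * by left; left.
    * by right; left.
    * by left; right.
    * by right; right.
  + case=> [[Az | [-> fA]] | [Bz | [-> fB]]].
    * by left; left.
    * right; split=> // l0; have [l' [? ?]] := fA l0.
      by exists l'; split => //; left.
    * by left; right.
    * right; split=> // l0; have [l' [? ?]] := fB l0.
      by exists l'; split => //; right.
Qed.

Lemma tail_nbhd_Some l : cl_nbhd tail_closure (Some l) [set Some l].
Proof. by case=> [/(_ erefl) | []]. Qed.

Lemma tail_nbhd_None l0 :
  cl_nbhd tail_closure None [set z | z = None \/ exists2 l, z = Some l & le l0 l].
Proof.
case=> [[] | [_ /(_ l0) [l [l0l nl]]]]; first by left.
by apply: nl; right; exists l.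
Qed.

End Nets.

Section Approach.
Context {Z : Type} (w : set Z -> set Z) (A : set Z) (z : Z).

Record approach := Approach {
  appr_nbhd : set Z;
  appr_pt : Z;
  appr_nbhdP : cl_nbhd w z appr_nbhd;
  appr_ptP : appr_nbhd appr_pt;
  appr_ptA : A appr_pt }.

Definition approach_le (a b : approach) := appr_nbhd b `<=` appr_nbhd a.

End Approach.

Arguments Approach {Z w A z}.
Arguments appr_nbhd {Z w A z}.
Arguments appr_pt {Z w A z}.
Arguments appr_nbhdP {Z w A z}.
Arguments appr_ptP {Z w A z}.
Arguments appr_ptA {Z w A z}.

Section ApproachDirected.
Context {Z : Type} {w : set Z -> set Z} {A : set Z} {z : Z}.
Hypotheses (hw : is_closure w) (wAz : w A z).

Lemma approach_exists {W : set Z} :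
  cl_nbhd w z W -> exists a : approach w A z, appr_nbhd a = W.
Proof.
move=> nW; have [a [Wa Aa]] := (closure_nbhdP hw A z).1 wAz W nW.
by exists (Approach _ _ nW Wa Aa).
Qed.

Lemma approach_directed : directed (approach_le w A z).
Proof.
split.
- by have [a _] := approach_exists (nbhdT hw z); exists a.
- by move=> a y.
- by move=> a b c ab bc y /bc /ab.
- move=> a1 a2.
  have [a Ea] := approach_exists (nbhdI hw _ _ _ (appr_nbhdP a1) (appr_nbhdP a2)).
  by exists a; rewrite /approach_le Ea; split=> y [].
Qed.

End ApproachDirected.

Section UpperLimitConvergence.
Context {X Y : Type} (u : set X -> set X) (v : set Y -> set Y).
Hypotheses (hu : is_closure u) (hv : is_closure v).

Definition ulim_cvg {L : Type} (le : L -> L -> Prop) (fn : L -> X -> Y) (f : X -> Y) :=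
  forall B, upper_limit u le (fun l => fn l @^-1` B) `<=` f @^-1` v B.

Definition net_open (G : set (contmap u v)) :=
  forall f, G f -> forall (L : Type) (le : L -> L -> Prop), directed le ->
  forall fn : L -> contmap u v,
    ulim_cvg le (fun l => proj1_sig (fn l)) (proj1_sig f) ->
    eventually le (fun l => G (fn l)).

Definition tail_map {L : Type} (fn : L -> X -> Y) (f : X -> Y) (p : option L * X) : Y :=
  if p.1 is Some l then fn l p.2 else f p.2.

Section TailMap.
Context {L : Type} {le : L -> L -> Prop} {fn : L -> X -> Y} {f : X -> Y}.
Hypotheses (fn_cont : forall l, cl_continuous u v (fn l)) (f_cont : cl_continuous u v f).
Hypothesis fn_cvg : ulim_cvg le fn f.

Let slice (S : set (option L * X)) z := [set x | S (z, x)].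

Lemma tail_map_slice_closure S z x :
  u (slice S z) x -> v (tail_map fn f @` S) (tail_map fn f (z, x)).
Proof.
move=> uSx; have cont : cl_continuous u v (fun x => tail_map fn f (z, x)).
  by case: z {uSx}.
apply: (closure_mono hv) (cont _ _ (imageP _ uSx)).
by move=> _ [x' Sx' <-]; exists (z, x').
Qed.

Lemma tail_map_continuous_at_Some S l x :
  prod_closure (tail_closure le) u S (Some l, x) ->
  v (tail_map fn f @` S) (fn l x).
Proof.
move=> Sp; apply: (tail_map_slice_closure S (Some l)).
apply/(closure_nbhdP hu) => U nU.
by have [[z' x'] [[/= -> Ux'] Sx']] := Sp _ _ (tail_nbhd_Some le l) nU; exists x'.
Qed.

Lemma tail_map_continuous_at_None S x :
  prod_closure (tail_closure le) u S (None, x) ->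
  v (tail_map fn f @` S) (f x).
Proof.
move=> Sp; have [uSx|] := pselect (u (slice S None) x).
  exact: (tail_map_slice_closure S None).
move/(closure_nbhdP hu)/existsNP => [U' /not_implyP [nU' U'S0]].
apply: fn_cvg => l0 U nU; apply: contrapT => /forallNP noSU.
have [[[l|] x'] [[/= Wz [Ux' U'x']] Sx']] :=
  Sp _ _ (tail_nbhd_None le l0) (nbhdI hu _ _ _ nU nU').
- case: Wz => [//|[_ [<-] l0l]].
  by apply: (noSU l); split=> //; exists x'; split=> //; exists (Some l, x').
- by apply: U'S0; exists x'.
Qed.

Lemma tail_map_continuous :
  cl_continuous (prod_closure (tail_closure le) u) v (tail_map fn f).
Proof.
move=> S _ [[[l|] x] Sp <-].
- exact: tail_map_continuous_at_Some.
- exact: tail_map_continuous_at_None.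
Qed.

End TailMap.

Lemma proper_open_net_open {tau : set (set (contmap u v))} :
  proper_closure u v (kclosure tau) -> tau `<=` net_open.
Proof.
move=> tau_proper G tauG f Gf L le dir fn fn_cvg.
apply: contrapT => /not_eventually nG.
pose gs (z : option L) := if z is Some l then fn l else f.
pose A := Some @` [set l | ~ G (fn l)].
have wAf : (gs @` tail_closure le A) f.
  exists None => //; right; split=> // l0.
  by have [l [l0l nGl]] := nG l0; exists l; split=> //; exact: imageP.
have g_cont := tail_map_continuous (fun l => proj2_sig (fn l)) (proj2_sig f) fn_cvg.
have gsE z x : proj1_sig (gs z) x =
    tail_map (fun l => proj1_sig (fn l)) (proj1_sig f) (z, x) by case: z.
have [y [Gy [z [l nGl Ez] Ey]]] :=
  tau_proper _ _ (tail_closure_is_closure _ dir) _ g_cont gs gsE A f wAf G tauG Gf.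
by move: Gy; rewrite -Ey -Ez.
Qed.

Lemma net_open_topology : is_topology net_open.
Proof.
split.
- by move=> f _ L le [[l _] _ _ _] fn _; exists l.
- by [].
- move=> I F Fopen f [i _ Fif] L le dir fn fn_cvg.
  by have [l0 evF] := Fopen i f Fif L le dir fn fn_cvg; exists l0 => l /evF; exists i.
- move=> G1 G2 G1open G2open f [G1f G2f] L le dir fn fn_cvg.
  exact: (eventuallyI _ dir (G1open f G1f L le dir fn fn_cvg)
                            (G2open f G2f L le dir fn fn_cvg)).
Qed.

Lemma approach_cvg {Z : Type} {w : set Z -> set Z} {A : set Z} {z : Z}
    {g : Z * X -> Y} {gs : Z -> contmap u v} :
  is_closure w -> w A z -> cl_continuous (prod_closure w u) v g ->
  (forall z x, proj1_sig (gs z) x = g (z, x)) ->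
  ulim_cvg (approach_le w A z) (fun a => proj1_sig (gs (appr_pt a))) (proj1_sig (gs z)).
Proof.
move=> hw wAz g_cont gsE B x ulx; rewrite /= gsE.
have : prod_closure w u (g @^-1` B) (z, x).
  move=> W U nW nU; have [a0 <-] := approach_exists hw wAz nW.
  have [a [a0a [x' [Bx' Ux']]]] := ulx a0 U nU.
  exists (appr_pt a, x'); split; last by rewrite /= -gsE.
  by split=> //; apply: a0a; exact: appr_ptP.
by move=> /(imageP g)/g_cont; apply: (closure_mono hv); exact: image_preimage_subset.
Qed.

Lemma net_open_proper : proper_closure u v (kclosure net_open).
Proof.
move=> Z w hw g g_cont gs gsE A _ [z wAz <-] G G_open Ggz.
have [a0 evG] := G_open _ Ggz _ _ (approach_directed hw wAz) _
  (approach_cvg hw wAz g_cont gsE).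
by exists (gs (appr_pt a0)); split; [exact: evG | exact/imageP/appr_ptA].
Qed.

End UpperLimitConvergence.

Theorem theorem8 (X Y : Type) (u : set X -> set X) (v : set Y -> set Y)
  (hu : is_closure u) (hv : is_closure v)
  (tau : set (set (contmap u v))) (htau : finest_proper_topology u v tau)
  (G : set (contmap u v)) :
  tau G <->
  (forall f : contmap u v, G f ->
   forall (L : Type) (le : L -> L -> Prop), directed le ->
   forall fn : L -> contmap u v,
     (forall B : set Y,
        upper_limit u le (fun l => proj1_sig (fn l) @^-1` B)
        `<=` proj1_sig f @^-1` v B) ->
     exists l0 : L, forall l, le l0 l -> G (fn l)).
Proof.
have [[_ tau_proper] tau_finest] := htau.
split=> [tauG | G_open].
  exact (proper_open_net_open u v hu hv tau_proper G tauG).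
have net_proper : proper_topology u v (net_open u v).
  by split; [exact: net_open_topology | exact: net_open_proper].
exact (tau_finest _ net_proper G G_open).
Qed.
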